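(* For every integer $n\ge 1$, $$\Phi^{(1)}[aq^n; b, b'; c; x, y] = \Phi^{(1)}[a; b, b'; c; x, y] + \frac{ax(1-b)}{1-c} \sum_{k=1}^n q^{k-1} \Phi^{(1)}[aq^k; bq, b'; cq; x, y] + \frac{ay(1-b')}{1-c} \sum_{k=1}^n q^{k-1} \Phi^{(1)}[aq^k; b, b'q; cq; xq, y]$$ and $$\Phi^{(1)}[aq^{-n}; b, b'; c; x, y] = \Phi^{(1)}[a; b, b'; c; x, y] - \frac{ax(1-b)}{1-c} \sum_{k=1}^n q^{-k} \Phi^{(1)}[aq^{1-k}; bq, b'; cq; x, y] - \frac{ay(1-b')}{1-c} \sum_{k=1}^n q^{-k} \Phi^{(1)}[aq^{1-k}; b, b'q; cq; xq, y].$$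
   Context: Let $q$ be a complex number with $0<|q|<1$. For complex $z$ and integer $m\ge 0$, $(z;q)_m=\prod_{j=0}^{m-1}(1-zq^j)$, with $(z;q)_0=1$. The $q$-Appell function $\Phi^{(1)}$ is $$\Phi^{(1)}[a; b, b'; c; x, y] = \sum_{m, n \geq 0} \frac{(a; q)_{m+n} (b; q)_m (b'; q)_n}{(q; q)_m (q; q)_n (c; q)_{m+n}} x^m y^n.$$ Identities are understood as identities of power series in $x,y$ (formal, or convergent for small $|x|,|y|$), with complex parameters $a,b,b',c$ chosen so that no denominator occurring vanishes. *)

From mathcomp Require Import all_boot all_order all_algebra.
From mathcomp Require Import complex.
From mathcomp Require Import reals.
Set Implicit Arguments. Unset Strict Implicit. Unset Printing Implicit Defensive.
Import Order.TTheory GRing.Theory Num.Theory.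
Local Open Scope ring_scope.

Definition qpoch (C : ringType) (q z : C) (m : nat) : C :=
  \prod_(j < m) (1 - z * q ^+ j).

(* Formal power series in two variables x, y, given by their coefficients:
   F m n is the coefficient of x^m y^n. *)
Definition ps2 (C : Type) := nat -> nat -> C.

Definition ps_add (C : ringType) (F G : ps2 C) : ps2 C := fun m n => F m n + G m n.
Definition ps_sub (C : ringType) (F G : ps2 C) : ps2 C := fun m n => F m n - G m n.
Definition ps_scale (C : ringType) (k : C) (F : ps2 C) : ps2 C := fun m n => k * F m n.
Definition ps_mulx (C : ringType) (F : ps2 C) : ps2 C :=
  fun m n => if m is m'.+1 then F m' n else 0.
Definition ps_muly (C : ringType) (F : ps2 C) : ps2 C :=
  fun m n => if n is n'.+1 then F m n' else 0.
Definition ps_substx (C : ringType) (q : C) (F : ps2 C) : ps2 C :=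
  fun m n => q ^+ m * F m n.
Definition ps_sum1 (C : ringType) (N : nat) (G : nat -> ps2 C) : ps2 C :=
  fun m n => \sum_(1 <= k < N.+1) G k m n.

Definition phi1 (C : fieldType) (q a b b' c : C) : ps2 C :=
  fun m n => qpoch q a (m + n) * qpoch q b m * qpoch q b' n
             / (qpoch q q m * qpoch q q n * qpoch q c (m + n)).

From mathcomp Require Import all_boot all_order all_algebra.
From mathcomp Require Import complex.
From mathcomp Require Import reals.
From mathcomp Require Import ring.
From Stdlib Require Import FunctionalExtensionality.
Import Order.TTheory GRing.Theory Num.Theory.
Local Open Scope ring_scope.

(* Since (aq;q)_{m+n} - (a;q)_{m+n} = a (1 - q^{m+n}) (aq;q)_{m+n-1} and
   1 - q^{m+n} = (1 - q^m) + q^m (1 - q^n), the coefficients of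
   Phi[aq] - Phi[a] split into two parts, which are those of
   a(1-b)/(1-c) x Phi[aq; bq, b'; cq; x, y] and of
   a(1-b')/(1-c) y Phi[aq; b, b'q; cq; xq, y].  Applying this contiguous
   relation at a q^(k-1), resp. a q^(-k), and telescoping over k = 1..N gives
   both identities. *)

Lemma qpoch0 (C : nzRingType) (q z : C) : qpoch q z 0 = 1.
Proof. by rewrite /qpoch big_ord0. Qed.

Lemma qpochS (C : nzRingType) (q z : C) m :
  qpoch q z m.+1 = (1 - z) * qpoch q (z * q) m.
Proof.
rewrite /qpoch big_ord_recl expr0 mulr1; congr (_ * _).
by apply: eq_bigr => i _; rewrite lift0 exprS mulrA.
Qed.

Lemma qpochSr (C : nzRingType) (q z : C) m :
  qpoch q z m.+1 = qpoch q z m * (1 - z * q ^+ m).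
Proof. by rewrite /qpoch big_ord_recr. Qed.

Arguments qpochS {C}.
Arguments qpochSr {C}.

Lemma qpoch_neq0 (F : idomainType) (q z : F) m :
  (forall j, 1 - z * q ^+ j != 0) -> qpoch q z m != 0.
Proof. by move=> hz; apply/prodf_neq0 => j _. Qed.

Lemma expS_neq1_norm_lt1 (R : numDomainType) (q : R) j :
  `|q| < 1 -> q ^+ j.+1 != 1.
Proof.
move=> hq1; apply/eqP => hq.
have := exprn_ilt1 j.+1 (normr_ge0 q) hq1.
by rewrite -normrX hq normr1 ltxx.
Qed.

Lemma ps_mulx_sum1 (C : nzRingType) N (s : nat -> C) (G : nat -> ps2 C) m n :
  ps_mulx (ps_sum1 N (fun k => ps_scale (s k) (G k))) m n =
  \sum_(1 <= k < N.+1) s k * ps_mulx (G k) m n.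
Proof.
rewrite /ps_mulx /ps_sum1 /ps_scale; case: m => [|m] //.
by rewrite big1 // => k _; rewrite mulr0.
Qed.

Lemma ps_muly_sum1 (C : nzRingType) N (s : nat -> C) (G : nat -> ps2 C) m n :
  ps_muly (ps_sum1 N (fun k => ps_scale (s k) (G k))) m n =
  \sum_(1 <= k < N.+1) s k * ps_muly (G k) m n.
Proof.
rewrite /ps_muly /ps_sum1 /ps_scale; case: n => [|n] //.
by rewrite big1 // => k _; rewrite mulr0.
Qed.

Section Contiguity.

Variables (F : fieldType) (q b b' c : F).
Hypothesis hq : forall j, 1 - q ^+ j.+1 != 0.
Hypothesis hc : forall j, 1 - c * q ^+ j != 0.

Let qpoch_q_neq0 m : qpoch q q m != 0.
Proof. by apply: qpoch_neq0 => j; rewrite -exprS. Qed.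

Let qpoch_cq_neq0 m : qpoch q (c * q) m != 0.
Proof. by apply: qpoch_neq0 => j; rewrite -mulrA -exprS. Qed.

Let qpoch_c_neq0 m : qpoch q c m != 0.
Proof. exact: qpoch_neq0. Qed.

Let subc_neq0 : 1 - c != 0.
Proof. by have := hc 0; rewrite mulr1. Qed.

Lemma phi1_mulx_coef a m n t : (m + n)%N = t.+1 ->
  a * (1 - b) / (1 - c) * ps_mulx (phi1 q (a * q) (b * q) b' (c * q)) m n =
  a * qpoch q (a * q) t * qpoch q b m * qpoch q b' n * (1 - q ^+ m)
    / (qpoch q q m * qpoch q q n * qpoch q c t.+1).
Proof.
case: m => [|m] /= ht; first by rewrite expr0 subrr !(mulr0, mul0r).
move: ht; rewrite addSn => -[ht].
rewrite /phi1 ht qpochS (qpochS q c) (qpochSr q q m) -exprS.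
by field; rewrite qpoch_cq_neq0 subc_neq0 !qpoch_q_neq0 hq.
Qed.

Lemma phi1_muly_coef a m n t : (m + n)%N = t.+1 ->
  a * (1 - b') / (1 - c) *
    ps_muly (ps_substx q (phi1 q (a * q) b (b' * q) (c * q))) m n =
  a * q ^+ m * qpoch q (a * q) t * qpoch q b m * qpoch q b' n * (1 - q ^+ n)
    / (qpoch q q m * qpoch q q n * qpoch q c t.+1).
Proof.
case: n => [|n] /= ht; first by rewrite expr0 subrr !(mulr0, mul0r).
move: ht; rewrite addnS => -[ht].
rewrite /ps_substx /phi1 ht qpochS (qpochS q c) (qpochSr q q n) -exprS.
by field; rewrite qpoch_cq_neq0 subc_neq0 !qpoch_q_neq0 hq.
Qed.

Lemma phi1_contiguous a m n :
  phi1 q (a * q) b b' c m n = phi1 q a b b' c m n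
   + a * (1 - b) / (1 - c) * ps_mulx (phi1 q (a * q) (b * q) b' (c * q)) m n
   + a * (1 - b') / (1 - c) *
       ps_muly (ps_substx q (phi1 q (a * q) b (b' * q) (c * q))) m n.
Proof.
case ht: (m + n)%N => [|t].
  move/eqP: ht; rewrite addn_eq0 => /andP[/eqP-> /eqP->].
  by rewrite /phi1 /= !qpoch0 !mulr0 !addr0.
rewrite (phi1_mulx_coef a _ _ _ ht) (phi1_muly_coef a _ _ _ ht) /phi1 ht.
have hqt : q ^+ t.+1 = q ^+ m * q ^+ n by rewrite -exprD ht.
rewrite (qpochSr q (a * q)) (qpochS q a) -[a * q * _]mulrA -exprS hqt.
by field; rewrite qpoch_c_neq0 !qpoch_q_neq0.
Qed.

Lemma phi1_shift_pos a N m n :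
  phi1 q (a * q ^+ N) b b' c m n = phi1 q a b b' c m n
   + a * (1 - b) / (1 - c) * \sum_(1 <= k < N.+1) q ^+ k.-1 *
        ps_mulx (phi1 q (a * q ^+ k) (b * q) b' (c * q)) m n
   + a * (1 - b') / (1 - c) * \sum_(1 <= k < N.+1) q ^+ k.-1 *
        ps_muly (ps_substx q (phi1 q (a * q ^+ k) b (b' * q) (c * q))) m n.
Proof.
elim: N => [|N IH]; first by rewrite expr0 mulr1 !big_geq // !mulr0 !addr0.
have haN : a * q ^+ N * q = a * q ^+ N.+1 by rewrite exprSr mulrA.
rewrite -haN phi1_contiguous haN.
by rewrite !(big_nat_recr N.+1) //= IH; ring.
Qed.

Hypothesis q_neq0 : q != 0.

Lemma phi1_shift_neg a N m n :
  phi1 q (a * q ^ (- (N%:Z))) b b' c m n = phi1 q a b b' c m n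
   - a * (1 - b) / (1 - c) * \sum_(1 <= k < N.+1) q ^ (- (k%:Z)) *
        ps_mulx (phi1 q (a * q ^ (1 - k%:Z)) (b * q) b' (c * q)) m n
   - a * (1 - b') / (1 - c) * \sum_(1 <= k < N.+1) q ^ (- (k%:Z)) *
        ps_muly (ps_substx q (phi1 q (a * q ^ (1 - k%:Z)) b (b' * q) (c * q))) m n.
Proof.
elim: N => [|N IH]; first by rewrite oppr0 expr0z mulr1 !big_geq // !mulr0 !subr0.
have hN : 1 - (N.+1)%:Z = - (N%:Z) by rewrite -addn1 PoszD; ring.
have ha : a * q ^ (- (N.+1)%:Z) * q = a * q ^ (- (N%:Z)).
  by rewrite -mulrA -{2}[q]expr1z -expfzDr // -hN; congr (_ * q ^ _); ring.
have := phi1_contiguous (a * q ^ (- (N.+1)%:Z)) m n.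
rewrite ha IH => /(canLR (addrK _))/(canLR (addrK _)) hstep.
by rewrite !(big_nat_recr N.+1) //= hN -hstep; ring.
Qed.

End Contiguity.

Theorem theorem1 (R : realType) (q a b b' c : complex R) (N : nat)
  (hq0 : 0 < `|q|) (hq1 : `|q| < 1)
  (hc : forall j : nat, 1 - c * q ^+ j != 0)
  (hN : (1 <= N)%N) :
  phi1 q (a * q ^+ N) b b' c =
    ps_add
      (ps_add (phi1 q a b b' c)
         (ps_scale (a * (1 - b) / (1 - c))
            (ps_mulx (ps_sum1 N (fun k =>
               ps_scale (q ^+ k.-1) (phi1 q (a * q ^+ k) (b * q) b' (c * q)))))))
      (ps_scale (a * (1 - b') / (1 - c))
         (ps_muly (ps_sum1 N (fun k =>
            ps_scale (q ^+ k.-1)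
              (ps_substx q (phi1 q (a * q ^+ k) b (b' * q) (c * q)))))))
  /\
  phi1 q (a * q ^ (- (N%:Z))) b b' c =
    ps_sub
      (ps_sub (phi1 q a b b' c)
         (ps_scale (a * (1 - b) / (1 - c))
            (ps_mulx (ps_sum1 N (fun k =>
               ps_scale (q ^ (- (k%:Z)))
                 (phi1 q (a * q ^ (1 - k%:Z)) (b * q) b' (c * q)))))))
      (ps_scale (a * (1 - b') / (1 - c))
         (ps_muly (ps_sum1 N (fun k =>
            ps_scale (q ^ (- (k%:Z)))
              (ps_substx q (phi1 q (a * q ^ (1 - k%:Z)) b (b' * q) (c * q))))))).
Proof.
(* Both identities also hold for N = 0. *)
have q_neq0 : q != 0 by rewrite -normr_gt0.
have hq j : 1 - q ^+ j.+1 != 0 by rewrite subr_eq0 eq_sym expS_neq1_norm_lt1.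
split; apply: functional_extensionality => m;
  apply: functional_extensionality => n.
- by rewrite /ps_add /ps_scale ps_mulx_sum1 ps_muly_sum1 phi1_shift_pos.
- by rewrite /ps_sub /ps_scale ps_mulx_sum1 ps_muly_sum1 phi1_shift_neg.
Qed.
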